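(* Let $(X_n)_{n\ge 0}$ be a discrete-time Markov chain with state space $\mathbb{R}^d$ whose transition probabilities have densities with respect to Lebesgue measure: $p_n(x,y)=p_{n,n+1}(x,y)$ denotes the one-step transition density from time $n$ to time $n+1$, and $p_{n,m}(x,y)$, $m\ge n$, denotes the $(m-n)$-step transition density (with $p_{n,n}(x,\cdot)$ interpreted as the Dirac distribution $\delta_x$). Fix $N\in\mathbb{N}$ and, for $0\le m<N$, functions $\psi_m:\mathbb{R}^d\times\mathbb{R}^d\to\mathbb{R}_+$ such that for each $m$ and each $y$ the function $$q_m(y,\cdot):=\frac{p_{N-m-1}(\cdot,y)}{\psi_m(y,\cdot)}$$ is a probability density on $\mathbb{R}^d$. For $y\in\mathbb{R}^d$ let $(Y^y_m,\mathcal{Y}^y_m)_{0\le m\le N}$ be the process defined by $Y^y_0=y$, $\mathcal{Y}^y_0=1$, $$\mathbb{P}(Y^y_{m+1}\in dz'\mid Y^y_m=z)=q_m(z,z')\,dz',\qquad \mathcal{Y}^y_{m+1}=\mathcal{Y}^y_m\,\psi_m(Y^y_m,Y^y_{m+1}),\quad 0\le m<N.$$ Then for every $n$ with $0\le n\le N$ and every test function $g:\mathbb{R}^d\to\mathbb{R}$ (for which the expressions are well defined), $$\int g(x)\,p_{n,N}(x,y)\,dx=\mathbb{E}\left[g(Y^y_{N-n})\,\mathcal{Y}^y_{N-n}\right].$$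
   Context: For $n=N$ the left-hand side is understood with $p_{N,N}(x,y)$ the Dirac distribution at $y$, i.e. it equals $g(y)$. *)

From mathcomp Require Import all_boot all_algebra.
From mathcomp Require Import all_classical all_reals all_analysis.
Import GRing.Theory Num.Theory.

Set Implicit Arguments.
Unset Strict Implicit.
Unset Printing Implicit Defensive.

Local Open Scope classical_set_scope.
Local Open Scope ring_scope.
Local Open Scope ereal_scope.

Section markov_defs.
Context {dsp : measure_display} {T : measurableType dsp} {R : realType}.
Variable mu : {measure set T -> \bar R}.

(* [pstep p n k x y] is the (k+1)-step transition density p_{n,n+k+1}(x,y),
   built from the one-step densities p_j = p_{j,j+1} by Chapman-Kolmogorov:
   p_{n,m+1}(x,y) = \int p_{n,m}(x,z) p_m(z,y) dz. *)
Fixpoint pstep (p : nat -> T -> T -> R) (n k : nat) : T -> T -> \bar R :=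
  match k with
  | 0 => fun x y => (p n x y)%:E
  | k'.+1 => fun x y =>
      \int[mu]_z (pstep p n k' x z * (p (n + k')%N.+1 z y)%:E)
  end.

Definition ptrans (p : nat -> T -> T -> R) (n m : nat) : T -> T -> \bar R :=
  pstep p n (m - n).-1.

(* Left-hand side: \int g(x) p_{n,N}(x,y) dx, which is g(y) when n = N
   (p_{N,N}(x,.) is the Dirac mass at x). *)
Definition transition_integral (p : nat -> T -> T -> R) (g : T -> R)
    (n N : nat) (y : T) : \bar R :=
  if n == N then (g y)%:E
  else \int[mu]_x ((g x)%:E * ptrans p n N x y).

(* q_m(y,x) = p_{N-m-1}(x,y) / psi_m(y,x), computed in the extended reals
   (so c/0 = +oo for c > 0 and 0/0 = 0). *)
Definition qdens (p : nat -> T -> T -> R) (psi : nat -> T -> T -> R)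
    (N m : nat) (y x : T) : \bar R :=
  (p (N - m.+1)%N x y)%:E / (psi m y x)%:E.

(* [wexp q psi g k m z] = E[ g(Y_{m+k}) * prod_{m<=j<m+k} psi_j(Y_j,Y_{j+1})
                            | Y_m = z ]
   for the Markov chain Y whose transition density from time j to j+1 is
   q j, i.e. the iterated integral against the law of the chain. *)
Fixpoint wexp (q : nat -> T -> T -> \bar R) (psi : nat -> T -> T -> R)
    (g : T -> R) (k m : nat) (z : T) : \bar R :=
  match k with
  | 0 => (g z)%:E
  | k'.+1 => \int[mu]_z' (q m z z' * (psi m z z')%:E * wexp q psi g k' m.+1 z')
  end.

Definition weighted_expectation (p psi : nat -> T -> T -> R) (g : T -> R)
    (N k : nat) (y : T) : \bar R :=
  wexp (qdens p psi N) psi g k 0 y.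

End markov_defs.

(* Lebesgue measure on R^d (here d.-tuple R with the product (Borel)
   sigma-algebra) is characterised as the measure giving every box
   ]a,b] its volume. *)
Definition is_lebesgue_Rd {R : realType} (d : nat)
    (mu : {measure set (d.-tuple R) -> \bar R}) : Prop :=
  forall a b : d.-tuple R, (forall i, (tnth a i <= tnth b i)%R) ->
    mu [set x | forall i, (tnth a i < tnth x i <= tnth b i)%R] =
    (\prod_(i < d) (tnth b i - tnth a i))%:E.

From HB Require Import structures.
From mathcomp Require Import all_boot all_order all_algebra.
From mathcomp Require Import all_classical all_reals all_analysis.
From mathcomp Require Import measurable_realfun zify.
Import GRing.Theory Num.Theory Order.TTheory.
Local Open Scope classical_set_scope.
Local Open Scope ring_scope.
Local Open Scope ereal_scope.

(* Where psi_m vanishes, the density q_m = p_{N-m-1}/psi_m is +oo wherever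
   p_{N-m-1} is not 0; since q_m integrates to 1 this happens only on a null
   set, so the weight q_m psi_m of the reversed chain equals p_{N-m-1}(., y)
   almost everywhere.  For nonnegative g the identity then follows by
   induction on N - n from Chapman-Kolmogorov and Tonelli; a general g is
   split into positive and negative parts, the finiteness of the right-hand
   side for |g| keeping every subtraction well defined. *)

Lemma measurable_box {R : realType} {d : nat} (a b : d.-tuple R) :
  measurable [set x : d.-tuple R | forall i, (tnth a i < tnth x i <= tnth b i)%R].
Proof.
rewrite (_ : [set x | _] = \bigcap_(i in [set: 'I_d])
    ((@tnth _ R ^~ i) @^-1` `]tnth a i, tnth b i]%classic)).
  apply: fin_bigcap_measurable => // i _.
  rewrite -[X in measurable X]setTI.
  exact: (@measurable_tnth _ _ _ i measurableT _ (measurable_itv _)).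
apply/seteqP; split => x /= H.
  by move=> i _; rewrite /= in_itv /=; exact: H i.
by move=> i; have := H i I; rewrite /= in_itv.
Qed.

Lemma lebesgue_Rd_sigma_finite {R : realType} {d : nat}
    {mu : {measure set (d.-tuple R) -> \bar R}} :
  is_lebesgue_Rd mu -> sigma_finite setT mu.
Proof.
move=> mu_leb.
pose box (k : nat) := [set x : d.-tuple R | forall i,
  (tnth [tuple (- k%:R : R)%R | _ < d] i < tnth x i <=
   tnth [tuple (k%:R : R) | _ < d] i)%R].
exists box.
  apply/seteqP; split => // x _.
  exists (Num.Def.truncn (\sum_i `|tnth x i|)%R).+1 => // i.
  rewrite !tnth_mktuple.
  have xi_le : (`|tnth x i| <= \sum_i `|tnth x i|)%R.
    by rewrite (bigD1 i) //= lerDl sumr_ge0.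
  move: (le_lt_trans xi_le (truncnS_gt _)).
  by rewrite ltr_norml => /andP[-> /ltW ->].
move=> k; split; first exact: measurable_box.
rewrite mu_leb ?ltry // => i; rewrite !tnth_mktuple.
by apply: (@le_trans _ _ 0%R); rewrite ?oppr_le0 ler0n.
Qed.

Section sigma_finite_copy.
Context {dsp : measure_display} {T : measurableType dsp} {R : realType}.
Variables (mu : {measure set T -> \bar R}) (mu_sf : sigma_finite setT mu).

(* [mu] itself, with a dependency on [mu_sf] (through the [let]) so that it can
   carry the sigma-finite measure instance needed for Fubini-Tonelli. *)
Definition sigma_finite_copy : set T -> \bar R := let _ := mu_sf in mu.

HB.instance Definition _ := Measure.copy sigma_finite_copy mu.
HB.instance Definition _ :=
  @Measure_isSigmaFinite.Build _ _ _ sigma_finite_copy mu_sf.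

End sigma_finite_copy.

Section integral_facts.
Context {dsp : measure_display} {T : measurableType dsp} {R : realType}.
Variable mu : {measure set T -> \bar R}.

Lemma ge0_le_integral_without_meas (f1 f2 : T -> \bar R) :
  (forall x, 0 <= f1 x) -> (forall x, f1 x <= f2 x) ->
  \int[mu]_x f1 x <= \int[mu]_x f2 x.
Proof.
move=> f1_ge0 f12; have f2_ge0 x : 0 <= f2 x := le_trans (f1_ge0 x) (f12 x).
rewrite !ge0_integralE//.
apply: ereal_sup_le => _ /= [h hf1 <-]; exists h => //= x.
by apply: le_trans (hf1 x) _; rewrite !patchE; case: ifP.
Qed.

Lemma measure0_of_pinfty_on (f : T -> \bar R) (S : set T) : measurable S ->
  (forall x, 0 <= f x) -> (forall x, S x -> f x = +oo) ->
  \int[mu]_x f x < +oo -> mu S = 0.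
Proof.
move=> mS f_ge0 fS f_fin; apply/eqP/negPn/negP => muS.
suff : \int[mu]_x ((cst +oo) \_ S) x <= \int[mu]_x f x.
  rewrite -integral_mkcond integral_cst // gt0_mulye ?lt0e ?muS ?measure_ge0 //.
  by rewrite leye_eq => /eqP finf; rewrite finf ltxx in f_fin.
apply: ge0_le_integral_without_meas => x; rewrite patchE.
  by case: ifP => // _; rewrite leey.
by case: ifP => [/set_mem/fS ->|_].
Qed.

End integral_facts.

Lemma measurable_fun_section1 {d1 d2 : measure_display} {T1 : measurableType d1}
    {T2 : measurableType d2} {dU : measure_display} {U : measurableType dU}
    (h : T1 -> T2 -> U) (x : T1) :
  measurable_fun setT (fun xy : T1 * T2 => h xy.1 xy.2) ->
  measurable_fun setT (h x).
Proof. by move=> mh; exact: (measurableT_comp mh (pair1_measurable x)). Qed.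

Lemma measurable_fun_section2 {d1 d2 : measure_display} {T1 : measurableType d1}
    {T2 : measurableType d2} {dU : measure_display} {U : measurableType dU}
    (h : T1 -> T2 -> U) (y : T2) :
  measurable_fun setT (fun xy : T1 * T2 => h xy.1 xy.2) ->
  measurable_fun setT (h^~ y).
Proof. by move=> mh; exact: (measurableT_comp mh (pair2_measurable y)). Qed.

Lemma measurable_fun_integral_section {d1 d2 : measure_display}
    {T1 : measurableType d1} {T2 : measurableType d2} {R : realType}
    (mu : {sigma_finite_measure set T2 -> \bar R}) (f : T1 * T2 -> \bar R) :
  measurable_fun setT f -> measurable_fun setT (fun x => \int[mu]_y f (x, y)).
Proof.
move=> mf; rewrite (_ : (fun x => _) =
    fun x => fubini_F mu (f^\+) x - fubini_F mu (f^\-) x).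
  apply: emeasurable_funB.
  - by apply: measurable_fun_fubini_tonelli_F => //; exact: measurable_funepos.
  - by apply: measurable_fun_fubini_tonelli_F => //; exact: measurable_funeneg.
apply/funext => x; rewrite /fubini_F [LHS]integralE.
by congr (_ - _); apply: eq_integral => y _; rewrite ?funeposE ?funenegE.
Qed.

Lemma ge0_integral_swap {d1 d2 : measure_display}
    {T1 : measurableType d1} {T2 : measurableType d2} {R : realType}
    (mu1 : {sigma_finite_measure set T1 -> \bar R})
    (mu2 : {sigma_finite_measure set T2 -> \bar R})
    (g : T1 -> \bar R) (a : T1 -> T2 -> \bar R) (b : T2 -> \bar R) :
  measurable_fun setT g -> measurable_fun setT b ->
  measurable_fun setT (fun xz : T1 * T2 => a xz.1 xz.2) ->
  (forall x, 0 <= g x) -> (forall z, 0 <= b z) -> (forall x z, 0 <= a x z) ->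
  \int[mu1]_x (g x * \int[mu2]_z (a x z * b z)) =
  \int[mu2]_z (b z * \int[mu1]_x (g x * a x z)).
Proof.
move=> mg mb ma g_ge0 b_ge0 a_ge0.
have ma_sec x : measurable_fun setT (a x) := measurable_fun_section1 _ x ma.
have ma_sec' z : measurable_fun setT (a^~ z) := measurable_fun_section2 _ z ma.
transitivity (\int[mu1]_x \int[mu2]_z (g x * (a x z * b z))).
  apply: eq_integral => x _; rewrite -ge0_integralZl //.
  - exact: emeasurable_funM.
  - by move=> z _; rewrite mule_ge0.
rewrite (fubini_tonelli (fun xz : T1 * T2 => g xz.1 * (a xz.1 xz.2 * b xz.2))) /=.
- apply: eq_integral => z _; rewrite -ge0_integralZl //.
  + by apply: eq_integral => x _; rewrite muleA muleC.
  + exact: emeasurable_funM.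
  + by move=> x _; rewrite mule_ge0.
- apply: emeasurable_funM; first exact: measurableT_comp mg measurable_fst.
  by apply: emeasurable_funM => //; exact: measurableT_comp mb measurable_snd.
- by move=> xz; rewrite !mule_ge0.
Qed.

Section funepos_EFinM.
Context {T : Type} {R : realDomainType}.
Variables (g : T -> R) (h : T -> \bar R).
Hypothesis h_ge0 : forall x, 0 <= h x.

Lemma funepos_EFinM : (fun x => (g x)%:E * h x)^\+ = fun x => (g^\+ x)%:E * h x.
Proof.
apply/funext => x; rewrite funeposE /funrpos.
have [g0|g0] := leP 0%R (g x).
  by rewrite !max_l ?mule_ge0.
rewrite max_r; last by apply: mule_le0_ge0 => //; rewrite lee_fin ltW.
by rewrite mul0e.
Qed.

Lemma funeneg_EFinM : (fun x => (g x)%:E * h x)^\- = fun x => (g^\- x)%:E * h x.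
Proof.
apply/funext => x; rewrite funenegE /funrneg.
have [g0|g0] := leP 0%R (g x).
  rewrite max_r; last by rewrite oppe_le0 mule_ge0.
  by rewrite max_r ?mul0e // oppr_le0.
rewrite max_l; last by rewrite oppe_ge0 mule_le0_ge0 // lee_fin ltW.
by rewrite max_l ?EFinN ?mulNe // oppr_ge0 ltW.
Qed.

End funepos_EFinM.

Section reversed_chain.
Context {dsp : measure_display} {T : measurableType dsp} {R : realType}.
Variable mu : {sigma_finite_measure set T -> \bar R}.
Variables (p psi : nat -> T -> T -> R) (N : nat).
Hypothesis p_ge0 : forall j x y, (0 <= p j x y)%R.
Hypothesis p_meas :
  forall j, measurable_fun setT (fun xy : T * T => p j xy.1 xy.2).
Hypothesis psi_ge0 : forall m y x, (m < N)%N -> (0 <= psi m y x)%R.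
Hypothesis psi_meas : forall m, (m < N)%N ->
  measurable_fun setT (fun yx : T * T => psi m yx.1 yx.2).
Hypothesis q_prob :
  forall m y, (m < N)%N -> \int[mu]_x qdens p psi N m y x = 1.

(* The weight q_m(z,z') psi_m(z,z') of one step of the reversed chain,
   written without the division (in \bar R, +oo * 0 = 0). *)
Definition weighted_kernel m z z' : R :=
  if psi m z z' == 0%R then 0%R else p (N - m.+1) z' z.

Fixpoint kernel_wexp (g : T -> R) (j m : nat) (z : T) : \bar R :=
  match j with
  | 0 => (g z)%:E
  | j'.+1 => \int[mu]_z' ((weighted_kernel m z z')%:E * kernel_wexp g j' m.+1 z')
  end.

Lemma weighted_kernel_ge0 m z z' : (0 <= weighted_kernel m z z')%R.
Proof. by rewrite /weighted_kernel; case: ifP. Qed.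

Lemma measurable_weighted_kernel m : (m < N)%N ->
  measurable_fun setT (fun zz : T * T => weighted_kernel m zz.1 zz.2).
Proof.
move=> mN; apply: measurable_fun_ifT.
- by apply: measurable_fun_eqr => //; exact: psi_meas.
- exact: measurable_cst.
- exact: (measurableT_comp (p_meas (N - m.+1)) (@measurable_swap _ _ T T)).
Qed.

Lemma measurable_weighted_kernel_section m z : (m < N)%N ->
  measurable_fun setT (fun z' => (weighted_kernel m z z')%:E).
Proof.
move=> mN; apply/measurable_EFinP.
exact: (measurable_fun_section1 _ z (measurable_weighted_kernel m mN)).
Qed.

Lemma qdens_psiE m z z' : (m < N)%N ->
  qdens p psi N m z z' * (psi m z z')%:E = (weighted_kernel m z z')%:E.
Proof.
move=> mN; rewrite /qdens /weighted_kernel.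
have [->|psi_neq0] := eqVneq (psi m z z') 0%R; first by rewrite mule0.
by rewrite inver (negPf psi_neq0) -!EFinM mulfVK.
Qed.

Lemma wexpE g j m z : (m + j <= N)%N ->
  wexp mu (qdens p psi N) psi g j m z = kernel_wexp g j m z.
Proof.
elim: j m z => //= j IH m z h; apply: eq_integral => z' _.
by rewrite qdens_psiE ?IH //; lia.
Qed.

Lemma kernel_wexp_ge0 g : (forall x, 0 <= g x)%R ->
  forall j m z, 0 <= kernel_wexp g j m z.
Proof.
move=> g_ge0; elim=> /= [|j IH] m z; first by rewrite lee_fin.
by apply: integral_ge0 => z' _; rewrite mule_ge0 // lee_fin weighted_kernel_ge0.
Qed.

Lemma measurable_kernel_wexp g : measurable_fun setT g ->
  forall j m, (m + j <= N)%N -> measurable_fun setT (kernel_wexp g j m).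
Proof.
move=> mg; elim=> /= [|j IH] m h; first exact/measurable_EFinP.
apply: (measurable_fun_integral_section mu
  (fun zz : T * T => (weighted_kernel m zz.1 zz.2)%:E * kernel_wexp g j m.+1 zz.2)).
apply: emeasurable_funM.
  by apply/measurable_EFinP; apply: measurable_weighted_kernel; lia.
exact: measurableT_comp (IH m.+1 ltac:(lia)) measurable_snd.
Qed.

Lemma integral_weighted_kernel m y (F : T -> \bar R) : (m < N)%N ->
  measurable_fun setT F -> (forall z, 0 <= F z) ->
  \int[mu]_z ((weighted_kernel m y z)%:E * F z) =
  \int[mu]_z ((p (N - m.+1) z y)%:E * F z).
Proof.
move=> mN mF F_ge0.
pose S := [set z | psi m y z = 0%R /\ p (N - m.+1) z y != 0%R].
have mS : measurable S.
  rewrite (_ : S = (fun z => (psi m y z == 0%R) && (p (N - m.+1) z y != 0%R))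
                     @^-1` [set true]).
    rewrite -[X in measurable X]setTI; apply: measurable_and => //.
      apply: measurable_fun_eqr => //.
      exact: (measurable_fun_section1 _ y (psi_meas _ mN)).
    apply: measurable_neg; apply: measurable_fun_eqr => //.
    exact: (measurable_fun_section2 _ y (p_meas _)).
  by apply/seteqP; split => z /=; [case=> /eqP -> ->|case/andP=> /eqP].
have S0 : mu S = 0.
  apply: (measure0_of_pinfty_on mu (qdens p psi N m y) _ mS).
  - by move=> x; rewrite /qdens mule_ge0 ?lee_fin ?inve_ge0 ?lee_fin ?psi_ge0.
  - move=> x [psi0 pn0]; rewrite /qdens psi0 inve0 mulr_infty gtr0_sg ?mul1e //.
    by rewrite lt_neqAle eq_sym pn0 p_ge0.
  - by rewrite q_prob // ltry.
have mp : measurable_fun setT (fun z => (p (N - m.+1) z y)%:E).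
  by apply/measurable_EFinP; exact: (measurable_fun_section2 _ y (p_meas _)).
apply: ge0_ae_eq_integral => //.
- exact: emeasurable_funM (measurable_weighted_kernel_section m y mN) mF.
- exact: emeasurable_funM mp mF.
- by move=> z _; rewrite mule_ge0 ?lee_fin ?weighted_kernel_ge0.
- by move=> z _; rewrite mule_ge0 ?lee_fin ?p_ge0.
exists S; split => // z /= /not_implyP[_]; apply: contra_notP => zNS.
congr (_%:E * _); rewrite /weighted_kernel.
case: eqP => // psi0; apply: contra_notP zNS => p_neq0.
by split => //; apply/eqP => p0; apply: p_neq0.
Qed.

Lemma pstep_ge0 n k x y : 0 <= pstep mu p n k x y.
Proof.
elim: k x y => /= [|k IH] x y; first by rewrite lee_fin.
by apply: integral_ge0 => z _; rewrite mule_ge0 ?lee_fin.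
Qed.

Lemma measurable_pstep n k :
  measurable_fun setT (fun xy : T * T => pstep mu p n k xy.1 xy.2).
Proof.
elim: k => /= [|k IH]; first exact/measurable_EFinP.
apply: (measurable_fun_integral_section mu (fun w : (T * T) * T =>
  pstep mu p n k w.1.1 w.2 * (p (n + k).+1 w.2 w.1.2)%:E)).
apply: emeasurable_funM.
  exact: measurableT_comp IH (measurable_fun_pair
    (measurableT_comp measurable_fst measurable_fst) measurable_snd).
apply/measurable_EFinP; exact: measurableT_comp (p_meas _) (measurable_fun_pair
  measurable_snd (measurableT_comp measurable_snd measurable_fst)).
Qed.

Lemma ge0_integral_pstep (g : T -> R) n : measurable_fun setT g ->
  (forall x, 0 <= g x)%R -> forall k m, (n + k + m).+1 = N -> forall y,
  \int[mu]_x ((g x)%:E * pstep mu p n k x y) = kernel_wexp g k.+1 m y.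
Proof.
move=> mg g_ge0; elim=> [|k IH] m hN y /=.
  rewrite integral_weighted_kernel; first last.
  - by move=> z; rewrite lee_fin.
  - exact/measurable_EFinP.
  - lia.
  rewrite (_ : (N - m.+1)%N = n); last by lia.
  by apply: eq_integral => x _; rewrite muleC.
have mpy : measurable_fun setT (fun z => (p (n + k).+1 z y)%:E).
  by apply/measurable_EFinP; exact: (measurable_fun_section2 _ y (p_meas _)).
rewrite (ge0_integral_swap mu mu _ _ _ ((measurable_EFinP _ _).2 mg) mpy
  (measurable_pstep n k)) /=;
  [|by move=> x; rewrite lee_fin|by move=> z; rewrite lee_fin|exact: pstep_ge0].
rewrite integral_weighted_kernel; first last.
- by move=> z; apply: (kernel_wexp_ge0 _ g_ge0 k.+1).
- by apply: (measurable_kernel_wexp _ mg k.+1); lia.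
- lia.
rewrite (_ : (N - m.+1)%N = (n + k).+1); last by lia.
by apply: eq_integral => z _; rewrite (IH m.+1) //; lia.
Qed.

Lemma kernel_wexp_norm (g : T -> R) : measurable_fun setT g ->
  forall j m z, (m + j <= N)%N ->
  kernel_wexp (fun x => `|g x|%R) j m z =
  kernel_wexp (g^\+)%R j m z + kernel_wexp (g^\-)%R j m z.
Proof.
move=> mg; elim=> /= [|j IH] m z h.
  by rewrite -EFinD; congr EFin; have := congr1 (fun h => h z) (funrposDneg g).
have mk := measurable_weighted_kernel_section m z ltac:(lia).
rewrite -ge0_integralD //; first last.
- apply: emeasurable_funM => //.
  by apply: measurable_kernel_wexp; [exact: measurable_funrneg|lia].
- by move=> x _; rewrite mule_ge0 ?lee_fin ?weighted_kernel_ge0 ?kernel_wexp_ge0.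
- apply: emeasurable_funM => //.
  by apply: measurable_kernel_wexp; [exact: measurable_funrpos|lia].
- by move=> x _; rewrite mule_ge0 ?lee_fin ?weighted_kernel_ge0 ?kernel_wexp_ge0.
apply: eq_integral => z' _; rewrite IH; last by lia.
by rewrite muleDr // ge0_adde_def // inE kernel_wexp_ge0.
Qed.

Lemma integrable_kernel_wexp (h : T -> R) j m z : (m + j < N)%N ->
  measurable_fun setT h -> (forall x, 0 <= h x)%R ->
  kernel_wexp h j.+1 m z < +oo ->
  mu.-integrable setT
    (fun z' => (weighted_kernel m z z')%:E * kernel_wexp h j m.+1 z').
Proof.
move=> h_lt mh h_ge0 h_fin; apply/integrableP; split.
  apply: emeasurable_funM; first by apply: measurable_weighted_kernel_section; lia.
  by apply: measurable_kernel_wexp => //; lia.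
rewrite (eq_integral (fun z' => (weighted_kernel m z z')%:E *
                                kernel_wexp h j m.+1 z')) //.
by move=> z' _; rewrite gee0_abs // mule_ge0 ?lee_fin ?weighted_kernel_ge0
  ?kernel_wexp_ge0.
Qed.

Lemma kernel_wexp_fin_ae (h : T -> R) j m z : (m + j < N)%N ->
  measurable_fun setT h -> (forall x, 0 <= h x)%R ->
  kernel_wexp h j.+1 m z < +oo ->
  {ae mu, forall z', weighted_kernel m z z' != 0%R ->
                     kernel_wexp h j m.+1 z' < +oo}.
Proof.
move=> h_lt mh h_ge0 h_fin.
pose F z' := (weighted_kernel m z z')%:E * kernel_wexp h j m.+1 z'.
have mF : measurable_fun setT F.
  apply: emeasurable_funM; first by apply: measurable_weighted_kernel_section; lia.
  by apply: measurable_kernel_wexp => //; lia.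
pose A := F @^-1` [set +oo].
have mA : measurable A.
  by rewrite -[A]setTI; exact: (mF measurableT [set +oo] (emeasurable_set1 _)).
exists A; split => //.
  apply: (measure0_of_pinfty_on mu F A mA _ (fun _ Ax => Ax) h_fin) => z'.
  by rewrite mule_ge0 ?lee_fin ?weighted_kernel_ge0 ?kernel_wexp_ge0.
move=> z' /= /not_implyP[k_neq0 /negP]; rewrite -leNgt leye_eq => /eqP W_oo.
have k_gt0 : (0 < (weighted_kernel m z z')%:E).
  by rewrite lte_fin lt_neqAle eq_sym k_neq0 weighted_kernel_ge0.
by rewrite /A /F /= W_oo gt0_muley.
Qed.

Lemma kernel_wexp_funrposBneg (g : T -> R) : measurable_fun setT g ->
  forall j m z, (m + j <= N)%N -> kernel_wexp (fun x => `|g x|%R) j m z < +oo ->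
  kernel_wexp g j m z = kernel_wexp (g^\+)%R j m z - kernel_wexp (g^\-)%R j m z.
Proof.
move=> mg; elim=> [|j IH] m z h fin.
  by rewrite /= -EFinB; congr EFin; have := congr1 (fun h => h z) (funrposBneg g).
have mgp := measurable_funrpos mg; have mgn := measurable_funrneg mg.
have [fin_pos fin_neg] : kernel_wexp (g^\+)%R j.+1 m z < +oo /\
                         kernel_wexp (g^\-)%R j.+1 m z < +oo.
  move: fin; rewrite kernel_wexp_norm // => fin.
  by split; apply: le_lt_trans fin; [apply: leeDl|apply: leeDr];
    apply: kernel_wexp_ge0; [exact: funrneg_ge0|exact: funrpos_ge0].
have mjN : (m + j < N)%N by lia.
have ip := integrable_kernel_wexp _ _ _ _ mjN mgp (funrpos_ge0 g) fin_pos.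
have iN := integrable_kernel_wexp _ _ _ _ mjN mgn (funrneg_ge0 g) fin_neg.
have fin_ae := kernel_wexp_fin_ae _ _ _ _ mjN
  (measurableT_comp (@normr_measurable R setT) mg) (fun x => normr_ge0 (g x)) fin.
rewrite /= -(integralB _ ip iN) //.
apply: ae_eq_integral => //.
- apply: emeasurable_funM; first by apply: measurable_weighted_kernel_section; lia.
  by apply: measurable_kernel_wexp => //; lia.
- by apply: emeasurable_funB; exact: (measurable_int mu).
apply: filterS fin_ae => z' fin_imp _.
have [->|k_neq0] := eqVneq (weighted_kernel m z z') 0%R.
  by rewrite !mul0e sube0.
have fin' := fin_imp k_neq0.
rewrite (IH m.+1 z' ltac:(lia) fin') muleBr //; apply: fin_num_adde_defl.
rewrite fin_numN ge0_fin_numE; last exact/kernel_wexp_ge0/funrneg_ge0.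
apply: le_lt_trans fin'; rewrite (kernel_wexp_norm _ mg j m.+1 z' ltac:(lia)).
by apply: leeDr; apply: kernel_wexp_ge0; exact: funrpos_ge0.
Qed.

Lemma transition_integral_wexp (g : T -> R) n y : measurable_fun setT g ->
  (n <= N)%N ->
  wexp mu (qdens p psi N) psi (fun z => `|g z|%R) (N - n) 0 y < +oo ->
  transition_integral mu p g n N y = wexp mu (qdens p psi N) psi g (N - n) 0 y.
Proof.
move=> mg hn fin; rewrite /transition_integral.
have [->|nN] := eqVneq n N; first by rewrite subnn.
rewrite !wexpE ?add0n ?leq_subr // in fin *.
rewrite (kernel_wexp_funrposBneg _ mg (N - n) 0 y (leq_subr _ _) fin).
have -> : (N - n)%N = (N - n).-1.+1 by lia.
have hN : (n + (N - n).-1 + 0).+1 = N by lia.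
rewrite -(ge0_integral_pstep _ _ (measurable_funrpos mg) (funrpos_ge0 g) _ _ hN).
rewrite -(ge0_integral_pstep _ _ (measurable_funrneg mg) (funrneg_ge0 g) _ _ hN).
by rewrite integralE /ptrans funepos_EFinM ?funeneg_EFinM // => x; exact: pstep_ge0.
Qed.

End reversed_chain.

Theorem theorem2 (R : realType) (d : nat)
  (mu : {measure set (d.-tuple R) -> \bar R})
  (mu_leb : is_lebesgue_Rd mu)
  (p : nat -> d.-tuple R -> d.-tuple R -> R)
  (p_ge0 : forall j x y, (0 <= p j x y)%R)
  (p_meas : forall j,
     measurable_fun setT (fun xy : d.-tuple R * d.-tuple R => p j xy.1 xy.2))
  (p_prob : forall j x, \int[mu]_y (p j x y)%:E = 1)
  (N : nat) (psi : nat -> d.-tuple R -> d.-tuple R -> R)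
  (psi_ge0 : forall m y x, (m < N)%N -> (0 <= psi m y x)%R)
  (psi_meas : forall m, (m < N)%N ->
     measurable_fun setT (fun yx : d.-tuple R * d.-tuple R => psi m yx.1 yx.2))
  (q_prob : forall m y, (m < N)%N -> \int[mu]_x qdens p psi N m y x = 1)
  (n : nat) (hn : (n <= N)%N)
  (g : d.-tuple R -> R) (g_meas : measurable_fun setT g)
  (y : d.-tuple R)
  (lhs_int : (n < N)%N ->
     mu.-integrable setT (fun x => (g x)%:E * ptrans mu p n N x y))
  (rhs_fin : weighted_expectation mu p psi (fun z => `|g z|%R) N (N - n) y < +oo) :
  transition_integral mu p g n N y = weighted_expectation mu p psi g N (N - n) y.
Proof.
pose leb := sigma_finite_copy mu (lebesgue_Rd_sigma_finite mu_leb).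
exact: (transition_integral_wexp leb _ _ _ p_ge0 p_meas psi_ge0 psi_meas q_prob
  _ _ _ g_meas hn rhs_fin).
Qed.
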